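(* Let $(G,\mathbf p)$ be a framework with $\mathbf p$ pinned with $\ell$-dimensional affine span, and let $E$ be an energy that is bar-like at $\mathbf p$, regarded as a function on $\ell$-pinned configuration space. Then $\mathbf p$ is a local minimum of $E$. Moreover, $(G,\mathbf p)$ is rigid (in the pinned sense below) if and only if $\mathbf p$ is a strict local minimum of $E$.
   Context: Fix a dimension $d$. A configuration is $\mathbf p=(\mathbf p_1,\dots,\mathbf p_n)$, $\mathbf p_i\in\mathbb R^d$; a framework $(G,\mathbf p)$ consists of a graph $G$ on $\{1,\dots,n\}$ and a configuration. A configuration $\mathbf q$ is in $\ell$-pinned position if $\mathbf q_1=0$ and, for $2\le i\le\ell+1$, $\mathbf q_i\in\mathrm{span}(e_1,\dots,e_{i-1})$; these form the $\ell$-pinned configuration space. If $\mathbf p$ has $\ell$-dimensional affine span, it is pinned if $\mathbf p_1,\dots,\mathbf p_{\ell+1}$ are affinely independent and $\mathbf p$ is in $\ell$-pinned position. $(G,\mathbf p)$ is (pinned) rigid if there is a neighborhood $U$ of $\mathbf p$ such that every $\ell$-pinned $\mathbf q\in U$ with $|\mathbf q_i-\mathbf q_j|=|\mathbf p_i-\mathbf p_j|$ for all edges $ij$ equals $\mathbf p$. An edge-based energy is $E(\mathbf q)=\sum_{ij\in E(G)}E_{ij}(|\mathbf q_i-\mathbf q_j|)$ for $\ell$-pinned $\mathbf q$, with $E_{ij}:\mathbb R\to\mathbb R$. It is bar-like at $\mathbf p$ if for each edge $ij$, $d_{ij}=|\mathbf p_i-\mathbf p_j|\ne0$, $E_{ij}$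 is analytic at $d_{ij}$, and $E_{ij}$ has a strict local minimum at $d_{ij}$. *)

From HB Require Import structures.
From mathcomp Require Import all_boot all_order all_algebra.
From mathcomp Require Import all_classical all_reals all_analysis.
Set Implicit Arguments. Unset Strict Implicit. Unset Printing Implicit Defensive.
Import Order.TTheory GRing.Theory Num.Theory numFieldNormedType.Exports.
Local Open Scope classical_set_scope.
Local Open Scope ring_scope.

Section Frameworks.
Variables (R : realType) (d n : nat).

(* Vertices 1..n+1 of the paper are the ordinals 'I_n.+1 (0-based);
   a configuration assigns to each vertex a point of R^d (coordinates 'I_d). *)
Definition config := 'I_n.+1 -> 'I_d -> R.

Definition edist (x y : 'I_d -> R) : R := Num.sqrt (\sum_(k < d) (x k - y k) ^+ 2).

Definition config_near (eps : R) (p q : config) : Prop :=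
  forall i k, `|q i k - p i k| < eps.

Definition affine_dim (p : config) (l : nat) : Prop :=
  \rank (\matrix_(i < n.+1, k < d) (p i k - p ord0 k)) = l.

(* p_1, ..., p_{l+1} (paper indexing) exist and are affinely independent. *)
Definition first_affinely_independent (p : config) (l : nat) : Prop :=
  (l <= n)%N /\
  \rank (\matrix_(i < l, k < d) (p (inord i.+1) k - p ord0 k)) = l.

(* l-pinned position: q_1 = 0 and q_i in span(e_1,...,e_{i-1}) for 2 <= i <= l+1;
   0-based: for vertex i <= l, all coordinates k >= i vanish. *)
Definition pinned_position (l : nat) (q : config) : Prop :=
  forall (i : 'I_n.+1) (k : 'I_d), (i <= l)%N -> (i <= k)%N -> q i k = 0.

Definition pinned (p : config) (l : nat) : Prop :=
  [/\ affine_dim p l, first_affinely_independent p l & pinned_position l p].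

(* Edge-based energy; the edge set of the (symmetric) graph G is {ij | i < j, G i j}. *)
Definition energy (G : rel 'I_n.+1) (Eij : 'I_n.+1 -> 'I_n.+1 -> R -> R)
  (q : config) : R :=
  \sum_(i < n.+1) \sum_(j < n.+1 | (i < j)%N && G i j) Eij i j (edist (q i) (q j)).

Definition analytic_at (f : R -> R) (x : R) : Prop :=
  exists (a : nat -> R) (r : R), 0 < r /\
    forall y, `|y - x| < r ->
      (fun N : nat => \sum_(k < N) a k * (y - x) ^+ k) @ \oo --> f y.

Definition strict_local_min_R (f : R -> R) (x : R) : Prop :=
  exists e : R, 0 < e /\ forall y, `|y - x| < e -> y != x -> f x < f y.

Definition bar_like (G : rel 'I_n.+1) (Eij : 'I_n.+1 -> 'I_n.+1 -> R -> R)
  (p : config) : Prop :=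
  forall i j : 'I_n.+1, (i < j)%N -> G i j ->
    [/\ edist (p i) (p j) != 0,
        analytic_at (Eij i j) (edist (p i) (p j)) &
        strict_local_min_R (Eij i j) (edist (p i) (p j))].

Definition pinned_local_min (l : nat) (F : config -> R) (p : config) : Prop :=
  exists eps : R, 0 < eps /\
    forall q, pinned_position l q -> config_near eps p q -> F p <= F q.

Definition pinned_strict_local_min (l : nat) (F : config -> R) (p : config) : Prop :=
  exists eps : R, 0 < eps /\
    forall q, pinned_position l q -> config_near eps p q -> q <> p -> F p < F q.

Definition pinned_rigid (G : rel 'I_n.+1) (p : config) (l : nat) : Prop :=
  exists eps : R, 0 < eps /\
    forall q, pinned_position l q -> config_near eps p q ->
      (forall i j, G i j -> edist (q i) (q j) = edist (p i) (p j)) -> q = p.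

End Frameworks.

(* Near p, each edge term E_ij(|q_i - q_j|) is at least E_ij(|p_i - p_j|), with equality
   exactly when the edge keeps its length: |q_i - q_j| depends continuously on q and E_ij
   has a strict local minimum at |p_i - p_j|.  Summing, E(q) >= E(p) for q near p, with
   equality iff q has the edge lengths of p.  Hence p is a strict local minimum iff p is
   the only nearby pinned configuration with the edge lengths of p, i.e. iff (G, p) is
   rigid. *)

From Pilot Require Import Defs.
From mathcomp Require Import all_boot all_order all_algebra.
From mathcomp Require Import all_classical all_reals all_analysis.
From mathcomp Require Import ring lra.
Import Order.TTheory GRing.Theory Num.Theory.
Local Open Scope classical_set_scope.
Local Open Scope ring_scope.

(* mathcomp-analysis has its own [edist], the extended distance of a pseudometric. *)
Local Notation edist := Defs.edist.

Lemma sqr_sub_sqrtr_le {R : rcfType} (a b : R) : 0 <= a -> 0 <= b ->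
  (Num.sqrt b - Num.sqrt a) ^+ 2 <= `|b - a|.
Proof.
move=> a_ge0 b_ge0.
have sa_ge0 := sqrtr_ge0 a; have sb_ge0 := sqrtr_ge0 b.
have -> : b - a = (Num.sqrt b - Num.sqrt a) * (Num.sqrt b + Num.sqrt a).
  by rewrite -{1}(sqr_sqrtr b_ge0) -{1}(sqr_sqrtr a_ge0); ring.
rewrite normrM -[_ ^+ 2]ger0_norm ?sqr_ge0 // normrX expr2 ler_wpM2l //.
rewrite [`|_ + Num.sqrt a|]ger0_norm; last lra.
by rewrite ler_norml; apply/andP; split; lra.
Qed.

Lemma sqr_sub_sqr_le {R : realDomainType} (u v : R) :
  `|u ^+ 2 - v ^+ 2| <= `|u - v| * (`|u - v| + 2 * `|v|).
Proof.
have -> : u ^+ 2 - v ^+ 2 = (u - v) * ((u - v) + 2 * v) by ring.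
by rewrite normrM ler_wpM2l // (le_trans (ler_normD _ _)) // normrM ger0_norm.
Qed.

Section EuclideanDistance.
Context {R : realType} {d : nat}.
Implicit Types x y : 'I_d -> R.

Lemma edistC x y : edist x y = edist y x.
Proof. by congr Num.sqrt; apply: eq_bigr => k _; rewrite -sqrrN opprB. Qed.

Lemma edist_near x y {e : R} : 0 < e ->
  \forall r \near (0 : R)^'+, forall x' y',
    (forall k, `|x' k - x k| < r) -> (forall k, `|y' k - y k| < r) ->
    `|edist x' y' - edist x y| < e.
Proof.
move=> e_gt0.
(* With u = x - y, each coordinate changes u^2 by at most 2r(2r + 2|u_k|) <= 4r(1 + |u_k|). *)
pose C := \sum_(k < d) 4 * (1 + `|x k - y k|).
have C_ge0 : 0 <= C by apply: sumr_ge0 => k _; rewrite mulr_ge0 ?addr_ge0.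
near=> r => x' y' x'x y'y.
have r_gt0 : 0 < r by near: r; exact: nbhs_right_gt.
have r_le1 : r <= 1 by near: r; exact: nbhs_right_le.
have rC_lt : r * C < e ^+ 2.
  have : r < e ^+ 2 / (C + 1).
    by near: r; apply: nbhs_right_lt; rewrite divr_gt0 ?exprn_gt0 //; lra.
  by rewrite ltr_pdivlMr; nra.
have sum_sqr_le :
    `|\sum_(k < d) (x' k - y' k) ^+ 2 - \sum_(k < d) (x k - y k) ^+ 2| <= r * C.
  rewrite -sumrB (le_trans (ler_norm_sum _ _ _)) // mulr_sumr ler_sum // => k _.
  have uv : `|(x' k - y' k) - (x k - y k)| <= 2 * r.
    have -> : (x' k - y' k) - (x k - y k) = (x' k - x k) - (y' k - y k) by ring.
    by rewrite (le_trans (ler_normB _ _)) //; have := x'x k; have := y'y k; lra.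
  apply: le_trans (sqr_sub_sqr_le _ _) _.
  have := normr_ge0 (x k - y k); have := normr_ge0 ((x' k - y' k) - (x k - y k)).
  nra.
have dist_sqr : (edist x' y' - edist x y) ^+ 2 <=
    `|\sum_(k < d) (x' k - y' k) ^+ 2 - \sum_(k < d) (x k - y k) ^+ 2|.
  by apply: sqr_sub_sqrtr_le; apply: sumr_ge0 => k _; exact: sqr_ge0.
rewrite -(ltr_pXn2r (n := 2)) ?nnegrE ?(ltW e_gt0) // -normrX ger0_norm ?sqr_ge0 //.
exact: le_lt_trans dist_sqr (le_lt_trans sum_sqr_le rC_lt).
Unshelve. all: by end_near.
Qed.

End EuclideanDistance.

Lemma config_near_min {R : realType} {d n : nat} {r s : R} {p q : config R d n} :
  config_near (Num.min r s) p q -> config_near r p q /\ config_near s p q.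
Proof. by move=> near_q; split=> i k; have := near_q i k; rewrite lt_min => /andP[]. Qed.

Section Energy.
Context {R : realType} {d n : nat}.
Variables (G : rel 'I_n.+1) (Eij : 'I_n.+1 -> 'I_n.+1 -> R -> R) (p : config R d n).

Definition same_edge_lengths (q : config R d n) : bool :=
  [forall i : 'I_n.+1, [forall (j : 'I_n.+1 | (i < j)%N && G i j),
    edist (q i) (q j) == edist (p i) (p j)]].

Lemma same_edge_lengthsP q : symmetric G -> irreflexive G ->
  reflect (forall i j, G i j -> edist (q i) (q j) = edist (p i) (p j))
          (same_edge_lengths q).
Proof.
move=> Gsym Girr; apply: (iffP forallP) => [same i j Gij | same i].
  have [ij|ji|/val_inj eq_ij] := ltngtP i j.
  - by have /forall_inP/(_ j) := same i; rewrite ij Gij => /(_ isT)/eqP.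
  - have /forall_inP/(_ i) := same j; rewrite ji Gsym Gij => /(_ isT)/eqP.
    by rewrite edistC [edist (p j) _]edistC.
  - by move: Gij; rewrite eq_ij Girr.
by apply/forall_inP => j /andP[_ Gij]; rewrite same.
Qed.

Lemma edge_energy_leif_near i j :
  strict_local_min_R (Eij i j) (edist (p i) (p j)) ->
  \forall r \near (0 : R)^'+, forall q, config_near r p q ->
    Eij i j (edist (p i) (p j)) <= Eij i j (edist (q i) (q j))
      ?= iff (edist (q i) (q j) == edist (p i) (p j)).
Proof.
move=> [e [e_gt0 min_e]].
move: (edist_near (p i) (p j) e_gt0); apply: filterS => r near_e q near_q.
have {}near_e := near_e _ _ (near_q i) (near_q j).
have [->|neq] := eqVneq (edist (q i) (q j)) (edist (p i) (p j)).
  exact: leif_refl.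
have lt := min_e _ near_e neq.
by split; [exact: ltW | rewrite (lt_eqF lt)].
Qed.

Lemma energy_leif_near :
  (forall i j : 'I_n.+1, (i < j)%N -> G i j ->
    strict_local_min_R (Eij i j) (edist (p i) (p j))) ->
  \forall r \near (0 : R)^'+, forall q, config_near r p q ->
    energy G Eij p <= energy G Eij q ?= iff same_edge_lengths q.
Proof.
move=> min_edges.
have : \forall r \near (0 : R)^'+, forall i j : 'I_n.+1, (i < j)%N && G i j ->
    forall q, config_near r p q ->
      Eij i j (edist (p i) (p j)) <= Eij i j (edist (q i) (q j))
        ?= iff (edist (q i) (q j) == edist (p i) (p j)).
  apply: filter_forall => i; apply: filter_forall => j.
  apply: filter_imply => /andP[ij Gij].
  exact: edge_energy_leif_near (min_edges i j ij Gij).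
apply: filterS => r edges q near_q.
by apply: leif_sum => i _; apply: leif_sum => j ijG; exact: edges.
Qed.

End Energy.

Theorem theorem3p3 (R : realType) (d n : nat) (G : rel 'I_n.+1) (l : nat)
  (p : config R d n) (Eij : 'I_n.+1 -> 'I_n.+1 -> R -> R) :
  symmetric G -> irreflexive G ->
  pinned p l -> bar_like G Eij p ->
  pinned_local_min l (energy G Eij) p /\
  (pinned_rigid G p l <-> pinned_strict_local_min l (energy G Eij) p).
Proof.
(* Pinning and the first two clauses of bar-likeness (nonzero length, analyticity) are unused. *)
move=> Gsym Girr _ bar.
have min_edges (i j : 'I_n.+1) (ij : (i < j)%N) (Gij : G i j) :
    strict_local_min_R (Eij i j) (edist (p i) (p j)).
  by have [] := bar i j ij Gij.
have /filter_ex[r [r_gt0 leif_near]] : \forall r \near (0 : R)^'+, 0 < r /\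
    forall q, config_near r p q ->
      energy G Eij p <= energy G Eij q ?= iff same_edge_lengths G p q.
  by apply/near_andP; split; [exact: nbhs_right_gt | exact: energy_leif_near].
split; first by exists r; split => // q _ /leif_near [].
split=> [[e [e_gt0 rigid]] | [e [e_gt0 strict]]];
  exists (Num.min r e); split=> [|q pinned_q /config_near_min[near_r near_e]];
  rewrite ?lt_min ?r_gt0 //.
  move=> q_ne_p; rewrite (lt_leif (leif_near q near_r)).
  apply: contra_notN q_ne_p => /same_edge_lengthsP-/(_ Gsym Girr) same.
  exact: rigid.
move=> same; have [//|q_ne_p] := pselect (q = p).
have same_q : same_edge_lengths G p q by apply/same_edge_lengthsP.
have := lt_leif (leif_near q near_r).
by rewrite (strict q pinned_q near_e q_ne_p) same_q.
Qed.
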